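(* Let $q$ be a prime power and let $M$ be a simple matroid representable over $GF(q)$ that has no coloops and has two distinct loose elements $e$ and $f$. Then $r(M)\le 2q$, or $\{e,f\}$ is a cocircuit of $M$.
   Context: All matroids are finite. An element $t$ of a matroid $M$ is loose if every circuit of $M$ containing $t$ has size at least the rank $r(M)$. *)

From mathcomp Require Import all_boot all_order all_algebra all_field.
Set Implicit Arguments. Unset Strict Implicit. Unset Printing Implicit Defensive.

Record matroid (E : finType) := Matroid {
  indep : {set E} -> bool;
  indep0 : indep set0;
  indep_sub : forall A B : {set E}, A \subset B -> indep B -> indep A;
  indep_aug : forall A B : {set E}, indep A -> indep B -> #|A| < #|B| ->
      exists2 x, x \in B :\: A & indep (x |: A)
}.

Section Matroid.
Variables (E : finType) (M : matroid E).

Definition rank (A : {set E}) : nat :=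
  \max_(B : {set E} | indep M B && (B \subset A)) #|B|.

Definition rk : nat := rank setT.

Definition basis (B : {set E}) : Prop :=
  indep M B /\ forall x, x \notin B -> ~~ indep M (x |: B).

Definition circuit (C : {set E}) : Prop :=
  ~~ indep M C /\ forall D : {set E}, D \proper C -> indep M D.

(* independent sets of the dual matroid M^* : complement spans M *)
Definition coindep (A : {set E}) : bool := rank (~: A) == rk.

Definition cocircuit (C : {set E}) : Prop :=
  ~~ coindep C /\ forall D : {set E}, D \proper C -> coindep D.

Definition coloop (e : E) : Prop := forall B, basis B -> e \in B.

(* simple: no loops and no parallel pairs, i.e. every circuit has size >= 3 *)
Definition simple : Prop := forall C, circuit C -> 2 < #|C|.

Definition loose (t : E) : Prop :=
  forall C, circuit C -> t \in C -> rk <= #|C|.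

Definition representable_over (F : fieldType) : Prop :=
  exists (n : nat) (v : E -> 'rV[F]_n),
    forall A : {set E}, indep M A = free [seq v x | x <- enum A].

Definition GF_representable (q : nat) : Prop :=
  exists F : finFieldType, #|F| = q /\ representable_over F.

End Matroid.

Definition prime_power (q : nat) : Prop :=
  exists p k : nat, [/\ prime p, 0 < k & q = p ^ k].

From mathcomp Require Import all_boot all_order all_algebra all_field.
From mathcomp Require Import zify.

(* If [{e, f}] is not a cocircuit then, as there are no coloops, it is
   coindependent, so some basis [B] avoids [e] and [f].  Write
   [v e = sum_b a_b v_b] and [v f = sum_b c_b v_b].  The fundamental circuit of
   [e] lies in [e] plus the support of [a], so looseness makes that support
   have at least [r - 1] elements; likewise for [c], hence the two supports
   share at least [r - 2] elements of [B].  If [r > 2q], pigeonhole on the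
   [q - 1] possible nonzero ratios [a_b / c_b] gives a value [l] taken at least
   three times, so [v e - l v f] is supported on at most [r - 3] elements of
   [B].  A circuit inside [e], [f] and that support then has at most [r - 1]
   elements and meets [{e, f}], contradicting looseness. *)

Set Implicit Arguments.
Unset Strict Implicit.
Unset Printing Implicit Defensive.

Import GRing.Theory.

Lemma fiber_card_gt (T U : finType) (g : T -> U) (A : {set T}) (C : {set U}) m :
  {in A, forall x, g x \in C} -> #|C| * m < #|A| ->
  exists y, m < #|[set x in A | g x == y]|.
Proof.
move=> gAC ltCA.
have [y big_y | small] := pickP (fun y => m < #|[set x in A | g x == y]|).
  by exists y.
suff : #|A| <= #|C| * m by rewrite leqNgt ltCA.
rewrite -sum1_card (partition_big g (mem C)) //= -sum_nat_const; apply: leq_sum => y _.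
by rewrite sum1dep_card leqNgt small.
Qed.

Section MatroidFacts.
Variables (E : finType) (M : matroid E).

Lemma card_le_rank (A X : {set E}) : indep M A -> A \subset X -> #|A| <= rank M X.
Proof.
move=> hA sAX.
apply: (@leq_bigmax_cond _ (fun B : {set E} => indep M B && (B \subset X)) (fun B => #|B|)).
by rewrite hA sAX.
Qed.

Lemma rankS (X Y : {set E}) : X \subset Y -> rank M X <= rank M Y.
Proof.
move=> sXY; apply/bigmax_leqP => B /andP[hB sBX].
exact: card_le_rank (subset_trans sBX sXY).
Qed.

Lemma rank_le_rk (X : {set E}) : rank M X <= rk M.
Proof. exact/rankS/subsetT. Qed.

Lemma rank_witness (X : {set E}) :
  exists B, [/\ indep M B, B \subset X & #|B| = rank M X].
Proof.
have : 0 < #|[pred B : {set E} | indep M B && (B \subset X)]|.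
  by apply/card_gt0P; exists set0; rewrite inE indep0 sub0set.
case/(eq_bigmax_cond (fun B : {set E} => #|B|)) => B; rewrite inE => /andP[hB sBX] maxB.
by exists B; split=> //; apply/esym.
Qed.

Lemma basis_card (B : {set E}) : basis M B -> #|B| = rk M.
Proof.
case=> hB maxB; apply/eqP; rewrite eqn_leq card_le_rank ?subsetT //=.
rewrite /rk; have [A [hA _ <-]] := rank_witness setT; rewrite leqNgt; apply/negP => ltBA.
have [x /setDP[_ xB]] := indep_aug hB hA ltBA.
by apply/negP/maxB.
Qed.

Lemma circuit_subset_dep (D : {set E}) :
  ~~ indep M D -> exists2 C, circuit M C & C \subset D.
Proof.
move=> depD.
have [|C /andP[depC sCD] minC] := @arg_minnP _ D
  (fun C : {set E} => ~~ indep M C && (C \subset D)) (fun C => #|C|).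
  by rewrite depD subxx.
exists C => //; split=> // C' ltC'C; apply/negPn/negP => depC'.
have := minC C'; rewrite depC' (subset_trans (proper_sub ltC'C) sCD) => /(_ isT).
by rewrite leqNgt proper_card.
Qed.

Lemma coindep1 (x : E) : ~ coloop M x -> coindep M [set x].
Proof.
move=> nx; apply/negPn/negP => dep_x; apply: nx => B basB.
apply/negPn/negP => xB; move/negP: dep_x; apply.
rewrite /coindep eqn_leq rank_le_rk -(basis_card basB) card_le_rank //; first by case: basB.
by apply/subsetP => y yB; rewrite !inE; apply: contraNneq xB => <-.
Qed.

Lemma coindepS (D D' : {set E}) : D \subset D' -> coindep M D' -> coindep M D.
Proof.
move=> sDD'; rewrite /coindep !eqn_leq !rank_le_rk => /leq_trans; apply.
by rewrite rankS // setCS.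
Qed.

Lemma cocircuit2 (x y : E) : ~ coloop M x -> ~ coloop M y ->
  ~~ coindep M [set x; y] -> cocircuit M [set x; y].
Proof.
move=> nx ny dep_xy; split=> // D /properP[sD [z]].
rewrite !inE => /orP[] /eqP-> zD.
- apply: coindepS (coindep1 ny); apply/subsetP => u uD.
  by move: (subsetP sD u uD); rewrite !inE => /orP[/eqP eux|//]; rewrite -eux uD in zD.
- apply: coindepS (coindep1 nx); apply/subsetP => u uD.
  by move: (subsetP sD u uD); rewrite !inE => /orP[//|/eqP euy]; rewrite -euy uD in zD.
Qed.

Lemma loose_dep_rk_le (S B D : {set E}) :
  {in S, forall x, loose M x} -> indep M B -> D \subset S :|: B ->
  ~~ indep M D -> rk M <= #|D|.
Proof.
move=> looseS hB sD /circuit_subset_dep[C circC sCD].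
apply: leq_trans (subset_leq_card sCD).
have [x /andP[xC xS] | noS] := pickP (fun x => (x \in C) && (x \in S)).
  exact: looseS xS C circC xC.
case: circC => /negP[]; apply: indep_sub hB; apply/subsetP => x xC.
move: (subsetP (subset_trans sCD sD) x xC); rewrite inE.
by have := noS x; rewrite xC /= => ->.
Qed.

End MatroidFacts.

Section Representation.
Variables (E : finType) (M : matroid E) (F : fieldType) (n : nat) (v : E -> 'rV[F]_n).
Hypothesis reprM : forall A : {set E}, indep M A = free [seq v x | x <- enum A].

Local Notation vspan A := <<[seq v x | x <- enum A]>>%VS.

Definition coef_support (B : {set E}) (k : E -> F) := [set b in B | k b != 0%R].

Lemma coef_support_sub (B : {set E}) (k : E -> F) : coef_support B k \subset B.
Proof. by apply/subsetP => b; rewrite inE => /andP[]. Qed.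

Lemma memv_vspan (A : {set E}) x : x \in A -> v x \in vspan A.
Proof. by move=> xA; rewrite memv_span // map_f // mem_enum. Qed.

Lemma vspanS (A A' : {set E}) : A \subset A' -> (vspan A <= vspan A')%VS.
Proof.
move=> sAA'; apply: sub_span => _ /mapP[x xA ->].
by rewrite map_f // mem_enum (subsetP sAA') // -mem_enum.
Qed.

Lemma indep_setU1 (x : E) (A : {set E}) : x \notin A ->
  indep M (x |: A) = (v x \notin vspan A) && indep M A.
Proof.
move=> xA; rewrite !reprM -free_cons -map_cons; apply/perm_free/perm_map.
apply: uniq_perm; rewrite /= ?mem_enum ?xA ?enum_uniq // => y.
by rewrite mem_enum in_setU1 inE mem_enum.
Qed.

Lemma rk_indep_vspan (B : {set E}) x :
  indep M B -> #|B| = rk M -> v x \in vspan B.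
Proof.
move=> indepB cardB; have [xB | xB] := boolP (x \in B); first exact: memv_vspan.
apply/negPn/negP => nspan.
have indep_xB : indep M (x |: B) by rewrite indep_setU1 // nspan.
by have := card_le_rank indep_xB (subsetT _); rewrite cardsU1 xB cardB ltnn.
Qed.

Lemma indep_coef (B : {set E}) w : indep M B -> w \in vspan B ->
  exists k : E -> F, w = (\sum_(b in B) k b *: v b)%R.
Proof.
rewrite reprM => freeB /(free_span freeB)[k -> _].
by exists (k \o v); rewrite big_map big_enum.
Qed.

Lemma sum_coef_vspan (B : {set E}) (k : E -> F) :
  (\sum_(b in B) k b *: v b)%R \in vspan (coef_support B k).
Proof.
apply: memv_suml => b bB; have [-> | kb] := eqVneq (k b) 0%R; first by rewrite scale0r mem0v.
by rewrite memvZ // memv_vspan // inE bB.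
Qed.

Lemma loose_vspan_rk_le (S B Y : {set E}) x :
  {in S, forall y, loose M y} -> indep M B -> x \in S -> x \notin Y ->
  Y \subset S :|: B -> v x \in vspan Y -> rk M <= #|Y|.+1.
Proof.
move=> looseS indepB xS xY sY spanx.
have <- : #|x |: Y| = #|Y|.+1 by rewrite cardsU1 xY.
apply: loose_dep_rk_le looseS indepB _ _; last by rewrite indep_setU1 // spanx.
by rewrite subUset sub1set inE xS.
Qed.

End Representation.

Section LoosePair.
Variables (E : finType) (M : matroid E) (F : finFieldType) (n : nat) (v : E -> 'rV[F]_n).
Hypothesis reprM : forall A : {set E}, indep M A = free [seq v x | x <- enum A].
Variables (e f : E) (B : {set E}).
Hypotheses (nef : e != f) (loose_e : loose M e) (loose_f : loose M f).
Hypotheses (indepB : indep M B) (eB : e \notin B) (fB : f \notin B).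
Hypothesis cardB : #|B| = rk M.

Let loose_ef : {in [set e; f], forall y, loose M y}.
Proof. by move=> y; rewrite !inE => /orP[] /eqP->. Qed.

Let support_sub_efB (k : E -> F) : coef_support B k \subset [set e; f] :|: B.
Proof. exact: subset_trans (coef_support_sub B k) (subsetUr _ _). Qed.

Lemma rk_le_support x (k : E -> F) : x \in [set e; f] ->
  v x = (\sum_(b in B) k b *: v b)%R -> rk M <= #|coef_support B k|.+1.
Proof.
move=> xef vx; apply: (loose_vspan_rk_le reprM loose_ef indepB xef).
- have xB : x \notin B by move: xef; rewrite !inE => /orP[] /eqP->.
  exact: contra (subsetP (coef_support_sub B k) x) xB.
- exact: support_sub_efB.
- by rewrite vx sum_coef_vspan.
Qed.

Lemma rk_le_support_pair (l : F) (k : E -> F) :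
  v e = (l *: v f + \sum_(b in B) k b *: v b)%R -> rk M <= #|coef_support B k| + 2.
Proof.
move=> ve; apply: (@leq_trans #|f |: coef_support B k|.+1).
  apply: (loose_vspan_rk_le reprM loose_ef indepB (setU11 _ _)).
  - by rewrite in_setU1 negb_or nef (contra (subsetP (coef_support_sub B k) e)).
  - by rewrite subUset sub1set !inE eqxx orbT support_sub_efB.
  rewrite ve memvD ?memvZ ?memv_vspan ?setU11 //.
  exact: subvP (vspanS v (subsetUr _ _)) _ (sum_coef_vspan v B k).
by rewrite cardsU1; have := leq_b1 (f \notin coef_support B k); lia.
Qed.

Lemma loose_pair_rk_le : rk M <= 2 * #|F|.
Proof.
have [a ha] := indep_coef reprM indepB (rk_indep_vspan reprM e indepB cardB).
have [c hc] := indep_coef reprM indepB (rk_indep_vspan reprM f indepB cardB).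
have rk_Sa := rk_le_support (set21 _ _) ha.
have rk_Sc := rk_le_support (set22 _ _) hc.
set Sa := coef_support B a in rk_Sa; set Sc := coef_support B c in rk_Sc.
have rk_Z : rk M <= #|Sa :&: Sc| + 2.
  have : #|Sa :|: Sc| <= rk M.
    by rewrite -cardB subset_leq_card // subUset !coef_support_sub.
  have := cardsUI Sa Sc; lia.
set Z := Sa :&: Sc in rk_Z.
rewrite leqNgt; apply/negP => big_rk.
have F_gt0 : 0 < #|F| by apply/card_gt0P; exists 0%R.
have ratio_nz : {in Z, forall b, (a b / c b)%R \in [set~ 0%R]}.
  move=> b; rewrite !inE => /andP[/andP[_ ab] /andP[_ cb]].
  by rewrite mulf_neq0 ?invr_neq0.
have many_ratios : #|[set~ (0 : F)%R]| * 2 < #|Z|.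
  (* Restated so that [lia] sees the same [#|F|] as in [big_rk]. *)
  have cardF1 : #|[set~ (0 : F)%R]| = #|F|.-1 := cardsC1 _.
  rewrite cardF1; lia.
have [l big_l] := fiber_card_gt ratio_nz many_ratios.
set K := [set b in Z | _] in big_l.
pose k b := (a b - l * c b)%R.
have ve : v e = (l *: v f + \sum_(b in B) k b *: v b)%R.
  rewrite ha hc scaler_sumr -big_split /=; apply: eq_bigr => b _.
  by rewrite scalerA -scalerDl /k addrC subrK.
have sK : coef_support B k \subset B :\: K.
  apply/subsetP => b; rewrite !inE => /andP[bB kb]; rewrite bB andbT.
  apply: contra kb; rewrite /k => /andP[/and3P[_ _ cb] /eqP <-].
  by rewrite divfK ?subrr.
have sKB : K \subset B.
  by apply/subsetP => b; rewrite !inE => /andP[/andP[/andP[]]].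
have := rk_le_support_pair ve; have := subset_leq_card sK.
rewrite cardsD (setIidPr sKB); lia.
Qed.

End LoosePair.

Theorem theorem4p1 (q : nat) (E : finType) (M : matroid E) (e f : E) :
  prime_power q ->
  GF_representable M q ->
  simple M ->
  (forall x : E, ~ coloop M x) ->
  e != f -> loose M e -> loose M f ->
  rk M <= 2 * q \/ cocircuit M [set e; f].
Proof.
move=> _ [F [cardF [n [v reprM]]]] _ no_coloop nef loose_e loose_f.
have [coindep_ef | dep_ef] := boolP (coindep M [set e; f]); last first.
  by right; apply: cocircuit2.
left; have [B [indepB sB cardB]] := rank_witness M (~: [set e; f]).
rewrite -cardF; apply: (loose_pair_rk_le reprM nef loose_e loose_f indepB).
- by apply/negP => /(subsetP sB); rewrite !inE eqxx.
- by apply/negP => /(subsetP sB); rewrite !inE eqxx orbT.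
- by rewrite cardB; apply/eqP.
Qed.
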